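(* For every $\alpha>0$ there exist a constant $c_0>0$ and infinitely many positive integers $n$ such that for each of them there is a real polynomial $P_n$ of degree $n$ satisfying: (1) $|P_n(x)|\le 1$ for $|x|\le1$, and $P_n(1)=P_n(-1)=1$; (2) $|P_n(x)|\le n^{-6}$ for $|x|\le 1-n^{-(2-\alpha)}$; (3) $P_n(x)\ge c_0$ for $1-n^{-2}\le|x|\le1$. *)

From HB Require Import structures.
From mathcomp Require Import all_boot all_order all_algebra.
From mathcomp Require Import all_classical all_reals all_analysis.

From HB Require Import structures.
From mathcomp Require Import all_boot all_order all_algebra.
From mathcomp Require Import all_classical all_reals all_analysis.
From mathcomp Require Import ring lra zify.
Import Order.TTheory GRing.Theory Num.Theory.

(* Take P = T_n(c x) / T_n(c) with n = 2^k, T_n the Chebyshev polynomial and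
   c = jouk (1 + g) = ((1 + g) + (1 + g)^-1) / 2 for g = 2^-j, so that
   T_n(c) = jouk ((1 + g)^n). On [-1, 1] we have |T_n(c x)| <= T_n(c). Since
   c <= 1 + g^2 / 2, every x with |x| <= 1 - g^2 has |c x| <= 1, hence
   |T_n(c x)| <= 1, while T_n(c) >= (1 + g)^n / 2 >= 2^(2^(k - j)) / 2 is huge.
   Near +-1, c |x| stays above jouk ((1 + g)(1 - 1/(2n))), so T_n(c x) is at
   least T_n(c) / 4. Taking q >= 1/alpha, k = 2 q t and j = k - t gives
   g^2 = n^(1/q - 2) <= n^(alpha - 2), and t large makes T_n(c) >= n^6. *)

Set Implicit Arguments.
Unset Strict Implicit.
Unset Printing Implicit Defensive.

Local Open Scope ring_scope.

Section PeakPolynomial.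
Variable R : realFieldType.
Implicit Types (a c d g t x y : R) (j k m : nat).

Lemma bernoulli_ler x m : -1 <= x -> 1 + m%:R * x <= (1 + x) ^+ m.
Proof.
move=> x_ge; elim: m => [|m IHm]; first by rewrite mul0r addr0 expr0.
rewrite exprS -natr1.
have : 0 <= (1 + x) * ((1 + x) ^+ m - (1 + m%:R * x)) by apply: mulr_ge0; lra.
have : 0 <= m%:R * x ^+ 2 by rewrite mulr_ge0 ?sqr_ge0.
rewrite expr2; nra.
Qed.

(* [cheb2 k] is the Chebyshev polynomial T_(2^k), via T_(2m) = 2 T_m^2 - 1. *)
Fixpoint cheb2 k : {poly R} :=
  if k is k.+1 then 2%:P * cheb2 k ^+ 2 - 1 else 'X.

Lemma horner_cheb20 y : (cheb2 0).[y] = y.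
Proof. exact: hornerX. Qed.

Lemma horner_cheb2S k y : (cheb2 k.+1).[y] = 2 * (cheb2 k).[y] ^+ 2 - 1.
Proof. by rewrite /= !hornerE. Qed.

Lemma size_cheb2 k : size (cheb2 k) = (2 ^ k).+1.
Proof.
elim: k => [|k IHk] /=; first by rewrite size_polyX.
have cheb2_neq0 : cheb2 k != 0 by rewrite -size_poly_eq0 IHk.
have size_sq : size (2%:P * cheb2 k ^+ 2) = (2 ^ k.+1).+1.
  by rewrite mul_polyC size_scale ?pnatr_eq0 // expr2 size_mul // IHk expnS; lia.
by rewrite size_polyDl size_sq // size_polyN size_poly1 ltnS expn_gt0.
Qed.

Lemma cheb2_even k y : (0 < k)%N -> (cheb2 k).[- y] = (cheb2 k).[y].
Proof.
case: k => // k _; elim: k => [|k IHk]; first by rewrite !horner_cheb2S !horner_cheb20 sqrrN.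
by rewrite horner_cheb2S IHk -horner_cheb2S.
Qed.

Lemma cheb2_1 k : (cheb2 k).[1] = 1.
Proof. by elim: k => [|k IHk]; rewrite ?horner_cheb20 // horner_cheb2S IHk; lra. Qed.

Lemma cheb2_ge1 k a : 1 <= a -> 1 <= (cheb2 k).[a].
Proof. by move=> a_ge1; elim: k => [|k IHk]; rewrite ?horner_cheb20 // horner_cheb2S; nra. Qed.

Lemma cheb2_norm_le k a y : 1 <= a -> `|y| <= a -> `|(cheb2 k).[y]| <= (cheb2 k).[a].
Proof.
move=> a_ge1 ya; elim: k => [|k IHk]; rewrite ?horner_cheb20 // !horner_cheb2S.
have := cheb2_ge1 k a_ge1; move: IHk; rewrite !ler_norml => /andP[lb ub] Ta_ge1.
apply/andP; split; nra.
Qed.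

(* Joukowski map: jouk (expR u) = cosh u. *)
Definition jouk t := (t + t^-1) / 2.

Lemma cheb2_jouk k t : 0 < t -> (cheb2 k).[jouk t] = jouk (t ^+ (2 ^ k)).
Proof.
move=> t_gt0; elim: k => [|k IHk]; rewrite ?horner_cheb20 ?expr1 //.
rewrite horner_cheb2S IHk expnS mulnC exprM /jouk.
have : t ^+ (2 ^ k) != 0 by rewrite expf_neq0 // gt_eqF.
set u := t ^+ (2 ^ k) => u_neq0; rewrite !expr2 invfM; field; exact: u_neq0.
Qed.

Lemma jouk_ge1 t : 0 < t -> 1 <= jouk t.
Proof.
move=> t_gt0; have tV : t * t^-1 = 1 by rewrite mulfV ?gt_eqF.
have : 0 < t^-1 by rewrite invr_gt0.
have : 0 <= (t - t^-1) ^+ 2 by apply: sqr_ge0.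
rewrite /jouk expr2; nra.
Qed.

Lemma jouk_ge_half t : 0 < t -> t / 2 <= jouk t.
Proof.
move=> t_gt0; rewrite /jouk.
have : 0 < t^-1 by rewrite invr_gt0.
lra.
Qed.

Lemma jouk_le t : 1 <= t -> jouk t <= t.
Proof.
move=> t_ge1; rewrite /jouk.
have : t^-1 <= 1 by rewrite invf_le1 ?(lt_le_trans _ t_ge1).
lra.
Qed.

Lemma jouk_1Dr_le g : 0 <= g -> jouk (1 + g) <= 1 + g ^+ 2 / 2.
Proof.
move=> g_ge0; have s_neq0 : 1 + g != 0 by rewrite gt_eqF //; lra.
have : 0 < (1 + g)^-1 by rewrite invr_gt0; lra.
have -> : jouk (1 + g) = 1 + g ^+ 2 / 2 - g ^+ 3 / 2 / (1 + g) by rewrite /jouk; field.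
have : 0 <= g ^+ 3 by rewrite exprn_ge0.
nra.
Qed.

Lemma jouk_1DrM1B_le g d : 0 < g <= 1 -> 0 < d -> 16 * d <= g ->
  jouk ((1 + g) * (1 - d)) <= jouk (1 + g) * (1 - 4 * d ^+ 2).
Proof.
move=> /andP[g_gt0 g_le1] d_gt0 dg; set s := 1 + g; set r := s * (1 - d).
have r_ge1 : 1 <= r by rewrite /r /s; nra.
have s_gt0 : 0 < s by rewrite /s; lra.
have jouk_sB : jouk s - jouk r = (s - r) * (1 - (s * r)^-1) / 2.
  have jouk_B u v : u != 0 -> v != 0 ->
      jouk u - jouk v = (u - v) * (1 - (u * v)^-1) / 2.
    by move=> u0 v0; rewrite /jouk invfM; field; apply/andP.
  by rewrite jouk_B // gt_eqF // (lt_le_trans _ r_ge1).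
have srV_le : (s * r)^-1 <= s^-1.
  have r_gt0 : 0 < r by apply: lt_le_trans r_ge1.
  by rewrite lef_pV2 ?posrE ?(mulr_gt0 s_gt0 r_gt0) // ler_peMr // ltW.
have gap : d * g <= (s - r) * (1 - (s * r)^-1).
  have sdV : s * d * s^-1 = d by rewrite mulrAC mulfV ?mul1r ?gt_eqF.
  have : 0 <= s * d * (s^-1 - (s * r)^-1).
    by apply: mulr_ge0; [apply: mulr_ge0; exact: ltW | rewrite subr_ge0].
  have -> : s - r = s * d by rewrite /r; ring.
  rewrite /s in sdV *; nra.
have s_ge1 : 1 <= s by rewrite /s; lra.
have := jouk_le s_ge1; have : 0 <= d ^+ 2 by rewrite sqr_ge0.
rewrite /s expr2; nra.
Qed.

Lemma jouk_1Dr_mul1B_le1 g d : 0 <= g -> g ^+ 2 <= d -> jouk (1 + g) * (1 - d) <= 1.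
Proof.
move=> g_ge0 gd; have := jouk_1Dr_le g_ge0; have := jouk_ge1 (ltr_pwDl ltr01 g_ge0).
have : 0 <= g ^+ 2 by rewrite sqr_ge0.
nra.
Qed.

Lemma exp2_le_jouk_pow j (t m : nat) : (m < 2 ^ t)%N ->
  2%:R ^+ m <= jouk ((1 + (2%:R ^+ j)^-1) ^+ (2 ^ (j + t))).
Proof.
move=> m_lt; set s := 1 + _.
have p2j_gt0 : 0 < 2%:R ^+ j :> R by rewrite exprn_gt0.
have s_gt0 : 0 < s by rewrite /s ltr_wpDr ?invr_ge0 ?ltW.
have two_le_s : 2 <= s ^+ (2 ^ j).
  have inv_gt0 : 0 < (2%:R ^+ j)^-1 :> R by rewrite invr_gt0.
  have := @bernoulli_ler (2%:R ^+ j)^-1 (2 ^ j).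
  rewrite natrX mulfV ?gt_eqF //; lra.
apply: le_trans (jouk_ge_half (exprn_gt0 _ s_gt0)).
rewrite expnD exprM ler_pdivlMr // -exprSr.
apply: le_trans (lerXn2r _ _ _ two_le_s); rewrite ?nnegrE ?ler_eXn2l //; lra.
Qed.

Definition peak_poly c k : {poly R} := ((cheb2 k).[c])^-1 *: (cheb2 k \Po (c *: 'X)).

Lemma horner_peak_poly c k x :
  (peak_poly c k).[x] = (cheb2 k).[c * x] / (cheb2 k).[c].
Proof. by rewrite hornerZ horner_comp hornerZ hornerX mulrC. Qed.

Lemma size_peak_poly c k : 1 <= c -> size (peak_poly c k) = (2 ^ k).+1.
Proof.
move=> c_ge1; have c_gt0 : 0 < c by apply: lt_le_trans c_ge1.
have Tc_neq0 : (cheb2 k).[c] != 0 by rewrite gt_eqF // (lt_le_trans _ (cheb2_ge1 k c_ge1)).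
rewrite size_scale ?invr_neq0 // size_comp_poly2 ?size_cheb2 //.
by rewrite size_scale ?size_polyX ?gt_eqF.
Qed.

Lemma peak_polyN c k x : (0 < k)%N -> (peak_poly c k).[- x] = (peak_poly c k).[x].
Proof. by move=> k_gt0; rewrite !horner_peak_poly mulrN cheb2_even. Qed.

Lemma peak_poly1 c k : 1 <= c -> (peak_poly c k).[1] = 1.
Proof.
move=> c_ge1; rewrite horner_peak_poly mulr1 mulfV // gt_eqF //.
exact: lt_le_trans (cheb2_ge1 k c_ge1).
Qed.

Lemma peak_poly_norm_le1 c k x : 1 <= c -> `|x| <= 1 -> `|(peak_poly c k).[x]| <= 1.
Proof.
move=> c_ge1 x_le1; have Tc_gt0 : 0 < (cheb2 k).[c].
  by apply: lt_le_trans (cheb2_ge1 k c_ge1).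
rewrite horner_peak_poly normrM normfV (gtr0_norm Tc_gt0) ler_pdivrMr // mul1r.
apply: cheb2_norm_le => //; rewrite normrM ger0_norm; last by lra.
by rewrite -[leRHS]mulr1 ler_wpM2l //; lra.
Qed.

Lemma peak_poly_small c k d x : 1 <= c -> c * (1 - d) <= 1 -> `|x| <= 1 - d ->
  `|(peak_poly c k).[x]| <= ((cheb2 k).[c])^-1.
Proof.
move=> c_ge1 cd xd; have Tc_gt0 : 0 < (cheb2 k).[c].
  by apply: lt_le_trans (cheb2_ge1 k c_ge1).
rewrite horner_peak_poly normrM normfV (gtr0_norm Tc_gt0).
rewrite -[leRHS]mul1r ler_wpM2r ?invr_ge0 ?(ltW Tc_gt0) //.
have cx_le1 : `|c * x| <= 1.
  by rewrite normrM ger0_norm; [apply: le_trans cd; rewrite ler_wpM2l | ]; lra.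
by have := cheb2_norm_le k (lexx 1) cx_le1; rewrite cheb2_1.
Qed.

Lemma peak_poly_jouk_ge g k x : 0 < g <= 1 -> 8 <= g * (2 ^ k)%:R ->
  1 - ((2 ^ k)%:R ^+ 2)^-1 <= `|x| -> 1 / 4 <= (peak_poly (jouk (1 + g)) k).[x].
Proof.
move=> /andP[g_gt0 g_le1] gn_ge8 x_ge.
have k_gt0 : (0 < k)%N by case: (posnP k) gn_ge8 => [-> | //]; rewrite expn0 mulr1; lra.
set n : R := (2 ^ k)%:R; set s := 1 + g; set d := (2 * n)^-1; set r := s * (1 - d).
have n_ge1 : 1 <= n by rewrite ler1n expn_gt0.
have d_gt0 : 0 < d by rewrite invr_gt0; lra.
have s_gt0 : 0 < s by rewrite /s; lra.
have -> : (peak_poly (jouk s) k).[x] = (peak_poly (jouk s) k).[`|x|].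
  by have [/ger0_norm -> | /ltr0_norm ->] := leP 0 x; rewrite ?peak_polyN.
(* With d = 1/(2n), the point r = (1+g)(1-d) still satisfies jouk r <= c |x|,
   while r^n loses at most a factor 2 against (1+g)^n. *)
have nd : n * d = 1 / 2 by rewrite /d; field; rewrite gt_eqF //; lra.
have dg : 16 * d <= g.
  have : 0 <= d * (g * n - 8) by apply: mulr_ge0; [exact: ltW | rewrite subr_ge0].
  have -> : d * (g * n - 8) = g * (n * d) - 8 * d by ring.
  rewrite nd; lra.
have r_gt0 : 0 < r by rewrite /r; apply: mulr_gt0 => //; lra.
have jouk_r_le : jouk r <= jouk s * `|x|.
  have g_in : 0 < g <= 1 by rewrite g_gt0.
  have := jouk_1DrM1B_le g_in d_gt0 dg; rewrite -/s -/r => /le_trans; apply.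
  have -> : 4 * d ^+ 2 = (n ^+ 2)^-1 by rewrite /d; field; rewrite gt_eqF //; lra.
  by rewrite ler_wpM2l // (le_trans _ (jouk_ge1 s_gt0)).
have Tr_le : jouk (r ^+ (2 ^ k)) <= (cheb2 k).[jouk s * `|x|].
  rewrite -cheb2_jouk //; apply: le_trans (ler_norm _) (cheb2_norm_le k _ _).
    exact: le_trans (jouk_ge1 r_gt0) jouk_r_le.
  by rewrite ger0_norm // (le_trans _ (jouk_ge1 r_gt0)).
have half_le : 1 / 2 <= (1 - d) ^+ (2 ^ k).
  have d_le1 : -1 <= - d by nra.
  by have := bernoulli_ler (2 ^ k) d_le1; rewrite -/n mulrN nd; lra.
have Ts_le : jouk (s ^+ (2 ^ k)) <= s ^+ (2 ^ k) by apply: jouk_le; rewrite exprn_ege1 // /s; lra.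
have rn_half := jouk_ge_half (exprn_gt0 (2 ^ k) r_gt0).
have sn_ge0 : 0 <= s ^+ (2 ^ k) by rewrite exprn_ge0 // ltW.
have := ler_wpM2l sn_ge0 half_le; rewrite -exprMn -/r => sn_le.
rewrite horner_peak_poly cheb2_jouk // ler_pdivlMr; last first.
  by apply: lt_le_trans (jouk_ge1 (exprn_gt0 _ s_gt0)).
lra.
Qed.

End PeakPolynomial.

Lemma sq_le_exp2 t : (4 <= t)%N -> (t * t <= 2 ^ t)%N.
Proof.
elim: t => // t IHt; rewrite leq_eqVlt => /orP[/eqP <- //|].
by rewrite ltnS => t_ge4; have := IHt t_ge4; rewrite expnS; nia.
Qed.

Lemma exists_natr_inv_le (R : archiFieldType) (a : R) :
  0 < a -> exists2 q : nat, (0 < q)%N & q%:R^-1 <= a.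
Proof.
move=> a_gt0; exists (Num.truncn a^-1).+1 => //.
rewrite -[leRHS]invrK lef_pV2 ?posrE ?invr_gt0 ?ltr0n //.
exact: ltW (truncnS_gt _).
Qed.

Lemma exp2_sqrV_le_powR (R : realType) (a : R) (q t : nat) :
  (0 < q)%N -> q%:R^-1 <= a ->
  ((2%:R ^+ (2 * q * t - t)) ^+ 2)^-1 <= (2 ^ (2 * q * t))%:R `^ (a - 2).
Proof.
move=> q_gt0 qa; set k := (2 * q * t)%N.
have exp_le : q%:R^-1 - 2 <= a - 2 by lra.
apply: le_trans (ler_powR (_ : 1 <= (2 ^ k)%:R) exp_le); last by rewrite ler1n expn_gt0.
have k_ge : (t <= k)%N by rewrite /k; nia.
rewrite natrX -[X in X `^ _]powR_mulrn ?ler0n // -powRrM.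
have -> : k%:R * (q%:R^-1 - 2) = - (2 * (k - t))%:R :> R.
  by rewrite natrM natrB // /k !natrM; field; rewrite pnatr_eq0 -lt0n.
by rewrite powRN powR_mulrn ?ler0n // -exprM mulnC.
Qed.

Theorem lemma4p2 (R : realType) (alpha : R) (halpha : 0 < alpha) :
  exists c0 : R, 0 < c0 /\
  forall N : nat, exists n : nat, (N < n)%N /\
    exists P : {poly R},
      size P = n.+1 /\
      (forall x : R, `|x| <= 1 -> `|P.[x]| <= 1) /\
      P.[1] = 1 /\ P.[-1] = 1 /\
      (forall x : R, `|x| <= 1 - (n%:R) `^ (alpha - 2) ->
         `|P.[x]| <= (n%:R ^+ 6)^-1) /\
      (forall x : R, 1 - (n%:R ^+ 2)^-1 <= `|x| <= 1 -> c0 <= P.[x]).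
Proof.
have [q q_gt0 q_le] := exists_natr_inv_le halpha.
exists (1 / 4); split; first lra.
move=> N; set t := (N + 12 * q + 4)%N; set k := (2 * q * t)%N; set j := (k - t)%N.
have jtk : (j + t)%N = k by rewrite subnK // /k; nia.
have k_gt0 : (0 < k)%N by rewrite /k /t; nia.
have t_large : (6 * k < 2 ^ t)%N.
  by apply: leq_trans (sq_le_exp2 _); rewrite /k /t; nia.
exists (2 ^ k)%N; split.
  by apply: leq_trans (ltn_expl k (isT : (1 < 2)%N)); rewrite /k /t; nia.
set g : R := (2%:R ^+ j)^-1; set c := jouk (1 + g).
have g_gt0 : 0 < g by rewrite invr_gt0 exprn_gt0.
have g_le1 : g <= 1 by rewrite invf_le1 ?exprn_gt0 ?exprn_ege1 //; lra.
have c_ge1 : 1 <= c by apply: jouk_ge1; lra.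
exists (peak_poly c k); split; first exact: size_peak_poly.
split; first by move=> x; apply: peak_poly_norm_le1.
split; first exact: peak_poly1.
split; first by rewrite peak_polyN // peak_poly1.
split.
  move=> x x_le; have gd := exp2_sqrV_le_powR t q_gt0 q_le; rewrite -exprVn -/g in gd.
  apply: le_trans (peak_poly_small k c_ge1 (jouk_1Dr_mul1B_le1 (ltW g_gt0) gd) x_le) _.
  rewrite lef_pV2 ?posrE ?exprn_gt0 ?ltr0n ?expn_gt0 //; last first.
    by apply: lt_le_trans (cheb2_ge1 k c_ge1).
  rewrite cheb2_jouk; last lra.
  by rewrite -jtk natrX -exprM mulnC exp2_le_jouk_pow // jtk.
move=> x /andP[x_ge _]; apply: peak_poly_jouk_ge => //; first by rewrite g_gt0.
rewrite -jtk natrX exprD mulrA mulVf ?mul1r ?gt_eqF ?exprn_gt0 //.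
by rewrite -natrX ler_nat -[8%N]/(2 ^ 3)%N leq_exp2l // /t; lia.
Qed.
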